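(* Let $D\ge1$, let $Q_D$ be the $D$-dimensional hypercube on $X=\{0,1\}^D$ with adjacency matrix $A$, and let $E_1V$ be the eigenspace of $A$ in $V=\mathbb{R}^X$ for the eigenvalue $D-2$. Every antisymmetric $A$-like matrix $B$ leaves $E_1V$ invariant, and the restriction map $B\mapsto B|_{E_1V}$, from the space of antisymmetric $A$-like matrices to the space of linear maps $T:E_1V\to E_1V$ satisfying $\langle Tu,w\rangle=-\langle u,Tw\rangle$ for all $u,w\in E_1V$, is injective.
   Context: $Q_D$ is the graph with vertex set $X=\{0,1\}^D$, two vertices adjacent iff they differ in exactly one coordinate. Matrices are real with rows and columns indexed by $X$ and act on $V=\mathbb{R}^X$, with inner product $\langle u,w\rangle=u^tw$. A matrix $B$ is $A$-like if $BA=AB$ and $B_{xy}=0$ for all $x,y\in X$ that are neither equal nor adjacent; it is antisymmetric if $B^t=-B$. *)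

From HB Require Import structures.
From mathcomp Require Import all_boot all_order all_algebra.
From mathcomp Require Export reals.
Set Implicit Arguments. Unset Strict Implicit. Unset Printing Implicit Defensive.
Import Order.TTheory GRing.Theory Num.Theory.
Local Open Scope ring_scope.

Notation cube D := {ffun 'I_D -> bool}.

(* Matrices with rows/columns indexed by X: square matrices of size |X|,
   where index i : 'I_#|X| stands for the vertex enum_val i. *)
Notation nX D := #|{: cube D}|.

Definition hadj (D : nat) (x y : cube D) : bool := #|[set i | x i != y i]| == 1%N.

Definition adjA (R : nzRingType) (D : nat) : 'M[R]_(nX D) :=
  \matrix_(i, j) (hadj (enum_val i) (enum_val j))%:R.

Definition A_like (R : nzRingType) (D : nat) (B : 'M[R]_(nX D)) : Prop :=
  B *m adjA R D = adjA R D *m B /\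
  forall i j : 'I_(nX D),
    enum_val i != enum_val j -> ~~ hadj (enum_val i) (enum_val j) -> B i j = 0.

Definition antisym (R : nzRingType) (n : nat) (B : 'M[R]_n) : Prop := B^T = - B.

Definition inE1 (R : nzRingType) (D : nat) (v : 'cV[R]_(nX D)) : Prop :=
  adjA R D *m v = (D%:R - 2) *: v.

Definition ip (R : nzRingType) (n : nat) (u w : 'cV[R]_n) : R := (u^T *m w) 0 0.

From mathcomp Require Import all_boot all_order all_algebra reals ring.
Set Implicit Arguments. Unset Strict Implicit. Unset Printing Implicit Defensive.
Import GRing.Theory Num.Theory.
Local Open Scope ring_scope.

(* The coordinate characters [chi k : x |-> (-1)^(x k)] lie in [E_1 V].  An
   antisymmetric A-like [B] is supported on the edges of [Q_D], and comparing
   the diagonals of [BA] and [AB] shows that its rows sum to zero; hence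
   [(B chi_k) x = -2 chi_k(x) B(x, x + e_k)].  So if [B] vanishes on [E_1 V],
   every edge entry of [B] vanishes and [B = 0]; injectivity follows by
   applying this to [B1 - B2].  Invariance of [E_1 V] only uses [BA = AB]. *)

Section HypercubeNeighbours.
Variable D : nat.

Definition flip (x : cube D) (j : 'I_D) : cube D := [ffun i => x i (+) (i == j)].

Lemma eq_flip (x y : cube D) j :
  (y == flip x j) = ([set i | x i != y i] == [set j]).
Proof.
apply/eqP/eqP => [->|/setP xy_j].
  by apply/setP => i; rewrite !inE ffunE; case: (x i); case: (i == j).
apply/ffunP => i; move: (xy_j i); rewrite !inE ffunE.
by case: (x i); case: (y i); case: (i == j).
Qed.

Lemma hadj_sym (x y : cube D) : hadj x y = hadj y x.
Proof. by rewrite /hadj; congr (_ == _); apply: eq_card => i; rewrite !inE eq_sym. Qed.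

Lemma hadjP (x y : cube D) : reflect (exists j, y = flip x j) (hadj x y).
Proof.
apply: (iffP cards1P) => -[j xy_j]; exists j; apply/eqP.
  by rewrite eq_flip xy_j.
by rewrite -eq_flip xy_j.
Qed.

Lemma hadj_sum_flip (R : pzSemiRingType) (x y : cube D) :
  (hadj x y)%:R = \sum_j ((y == flip x j)%:R : R).
Proof.
under eq_bigr do rewrite eq_flip.
case: (boolP (hadj x y)) => [/cards1P[j0 ->]|not_adj].
  rewrite (bigD1 j0) //= eqxx big1 ?addr0 // => j /negbTE j_neq.
  by rewrite eqEcard sub1set !inE eq_sym j_neq.
rewrite big1 // => j _; case: eqP => // xy_j.
by move: not_adj; rewrite /hadj xy_j cards1.
Qed.

Lemma sum_hadj (R : pzSemiRingType) (x : cube D) (g : cube D -> R) :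
  \sum_y (hadj x y)%:R * g y = \sum_j g (flip x j).
Proof.
under eq_bigr do rewrite hadj_sum_flip mulr_suml.
rewrite exchange_big /=; apply: eq_bigr => j _.
rewrite (bigD1 (flip x j)) //= eqxx mul1r big1 ?addr0 // => y /negbTE ->.
by rewrite mul0r.
Qed.

End HypercubeNeighbours.

Section Antisymmetric.
Variables (R : numDomainType) (n : nat).
Implicit Types (B : 'M[R]_n) (u w : 'cV[R]_n).

Lemma antisymE B i j : antisym B -> B j i = - B i j.
Proof. by move/matrixP/(_ i j); rewrite !mxE. Qed.

Lemma antisym_diag B i : antisym B -> B i i = 0.
Proof. by move/(antisymE i i)/esym/eqP; rewrite eqNr => /eqP. Qed.

Lemma antisymB B1 B2 : antisym B1 -> antisym B2 -> antisym (B1 - B2).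
Proof. by rewrite /antisym => A1 A2; rewrite linearB /= A1 A2 opprD. Qed.

Lemma ip_antisym B u w : antisym B -> ip (B *m u) w = - ip u (B *m w).
Proof. by rewrite /ip trmx_mul => ->; rewrite mulmxN mulNmx mulmxA mxE. Qed.

End Antisymmetric.

Section AdjacencyMatrix.
Variables (R : numDomainType) (D : nat).

Lemma commute_inE1 (B : 'M[R]_(nX D)) v :
  B *m adjA R D = adjA R D *m B -> inE1 v -> inE1 (B *m v).
Proof. by rewrite /inE1 mulmxA => <- Ev; rewrite -mulmxA Ev scalemxAr. Qed.

Lemma A_likeB (B1 B2 : 'M[R]_(nX D)) : A_like B1 -> A_like B2 -> A_like (B1 - B2).
Proof.
move=> [comm1 supp1] [comm2 supp2]; split; first by rewrite mulmxBl mulmxBr comm1 comm2.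
by move=> i j neq not_adj; rewrite !mxE supp1 ?supp2 ?subr0.
Qed.

Lemma adjA_mul_col (f : cube D -> R) i :
  (adjA R D *m \col_l f (enum_val l)) i 0 = \sum_j f (flip (enum_val i) j).
Proof.
rewrite mxE; under eq_bigr do rewrite !mxE.
by rewrite -(big_enum_val (fun y => (hadj (enum_val i) y)%:R * f y)%R) sum_hadj.
Qed.

Definition sign (k : 'I_D) (x : cube D) : R := (-1) ^+ x k.

Definition chi (k : 'I_D) : 'cV[R]_(nX D) := \col_i sign k (enum_val i).

Lemma sign_flip k x j : sign k (flip x j) = (-1) ^+ (k == j) * sign k x.
Proof. by rewrite /sign ffunE signr_addb mulrC. Qed.

Lemma sum_sign_eq (k : 'I_D) : \sum_j ((-1) ^+ (k == j) : R) = D%:R - 2.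
Proof.
under eq_bigr do rewrite signrE.
rewrite sumrB sumr_const card_ord (bigD1 k) //= eqxx big1 ?addr0 // => j.
by rewrite eq_sym => /negbTE ->.
Qed.

Lemma chi_E1 k : inE1 (chi k).
Proof.
apply/matrixP => i l; rewrite ord1 adjA_mul_col !mxE.
under eq_bigr do rewrite sign_flip.
by rewrite -mulr_suml sum_sign_eq.
Qed.

End AdjacencyMatrix.

Arguments sign {R D} k x.
Arguments chi {R D} k.

Section AntisymmetricALike.
Variables (R : numDomainType) (D : nat) (B : 'M[R]_(nX D)).
Hypotheses (B_A_like : A_like B) (B_antisym : antisym B).

Lemma A_like_hadj i l : B i l != 0 -> hadj (enum_val i) (enum_val l).
Proof.
apply: contraR => not_adj; have [<-|neq] := eqVneq i l; first by rewrite antisym_diag.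
by apply/eqP; apply: B_A_like.2 => //; rewrite (inj_eq enum_val_inj).
Qed.

Lemma A_like_mulr_hadj i l : B i l * (hadj (enum_val i) (enum_val l))%:R = B i l.
Proof.
by have [->|/A_like_hadj ->] := eqVneq (B i l) 0; rewrite ?mul0r ?mulr1.
Qed.

Lemma A_like_row_sum (g : cube D -> R) i :
  \sum_l B i l * g (enum_val l) =
  \sum_j B i (enum_rank (flip (enum_val i) j)) * g (flip (enum_val i) j).
Proof.
rewrite -(sum_hadj (enum_val i) (fun y => B i (enum_rank y) * g y)) [RHS]big_enum_val.
by apply: eq_bigr => l _; rewrite enum_valK mulrA [_ * B i l]mulrC A_like_mulr_hadj.
Qed.

Lemma A_like_rowsum0 i : \sum_l B i l = 0.
Proof.
set s := \sum_l B i l.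
have BA : (B *m adjA R D) i i = s.
  by rewrite mxE; apply: eq_bigr => l _; rewrite mxE hadj_sym A_like_mulr_hadj.
have AB : (adjA R D *m B) i i = - s.
  rewrite mxE -sumrN; apply: eq_bigr => l _.
  by rewrite mxE (antisymE i l B_antisym) mulrN mulrC A_like_mulr_hadj.
have /matrixP/(_ i i) := B_A_like.1.
by rewrite BA AB => /eqP; rewrite eq_sym eqNr => /eqP.
Qed.

Lemma A_like_mul_chi k i :
  (B *m chi k) i 0 = - 2 * sign k (enum_val i) * B i (enum_rank (flip (enum_val i) k)).
Proof.
set x := enum_val i.
have sum_flip : \sum_j B i (enum_rank (flip x j)) = 0.
  rewrite -[RHS](A_like_rowsum0 i); under [RHS]eq_bigr do rewrite -(mulr1 (B i _)).
  by rewrite (A_like_row_sum (fun=> 1)) /=; under [RHS]eq_bigr do rewrite mulr1.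
have sum_other : \sum_(j | j != k) B i (enum_rank (flip x j)) = - B i (enum_rank (flip x k)).
  by apply/eqP; move: sum_flip; rewrite (bigD1 k) //= addrC => /eqP; rewrite addr_eq0.
rewrite mxE; under eq_bigr do rewrite mxE.
rewrite A_like_row_sum (bigD1 k) //=.
under eq_bigr => j ne_jk do rewrite sign_flip eq_sym (negbTE ne_jk) expr0 mul1r.
rewrite -mulr_suml sum_other sign_flip eqxx expr1; ring.
Qed.

Lemma A_like_antisym_eq0 : (forall k, B *m chi k = 0) -> B = 0.
Proof.
move=> B_chi; apply/matrixP => i l; rewrite mxE; apply/eqP; apply: contraT => nz_il.
have /hadjP[k xl] := A_like_hadj nz_il.
move: nz_il; rewrite -[l]enum_valK xl => nz_il.
have /matrixP/(_ i 0) := B_chi k; rewrite A_like_mul_chi mxE => /eqP.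
by rewrite !mulf_eq0 oppr_eq0 pnatr_eq0 /sign signr_eq0 (negbTE nz_il).
Qed.

End AntisymmetricALike.

Theorem lemma9p2 (R : realType) (D : nat) (hD : (1 <= D)%N) :
  (forall B : 'M[R]_(nX D), A_like B -> antisym B ->
     forall v, inE1 v -> inE1 (B *m v)) /\
  (forall B : 'M[R]_(nX D), A_like B -> antisym B ->
     forall u w, inE1 u -> inE1 w -> ip (B *m u) w = - ip u (B *m w)) /\
  (forall B1 B2 : 'M[R]_(nX D), A_like B1 -> antisym B1 -> A_like B2 -> antisym B2 ->
     (forall v, inE1 v -> B1 *m v = B2 *m v) -> B1 = B2).
Proof.
split; [|split].
- by move=> B [comm _] _ v; apply: commute_inE1.
- by move=> B _ B_antisym u w _ _; apply: ip_antisym.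
- move=> B1 B2 L1 A1 L2 A2 eq_on_E1; apply/eqP; rewrite -subr_eq0; apply/eqP.
  apply: A_like_antisym_eq0 (A_likeB L1 L2) (antisymB A1 A2) _ => k.
  by rewrite mulmxBl eq_on_E1 ?subrr //; apply: chi_E1.
Qed.
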